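(* Assume (A1). Let $1\le r\le r'\le t$ and suppose $D_1=\dots=D_t$. Then for every pair of indices $i,j\in\{1,\dots,n\}$, $$\mathbb{E}\left|\hat C^{[r]}_{ij}(t)-\hat C^{[r']}_{ij}(t)\right|\le\sqrt{\frac1r-\frac1{r'}}.$$
   Context: Let $\ell_1,\dots,\ell_n:\mathbb{R}^d\to\{-1,1\}$ be functions and $X_1,X_2,\dots$ random inputs with $X_k\sim D_k$. (A1): for every finite $t$, $(X_1,\dots,X_t)\sim\prod_{k=1}^tD_k$. Empirical correlation matrix $\hat{\bm C}^{[r]}(t)=\frac1r\sum_{k=t-r+1}^t\bm v_k\bm v_k^T$ with $\bm v_k=(\ell_1(X_k),\dots,\ell_n(X_k))^T$. *)

From HB Require Import structures.
From mathcomp Require Import all_boot all_order all_algebra.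
From mathcomp Require Import all_classical all_reals all_analysis.
Set Implicit Arguments. Unset Strict Implicit. Unset Printing Implicit Defensive.
Import Order.TTheory GRing.Theory Num.Theory.
Local Open Scope classical_set_scope.
Local Open Scope ring_scope.

(* Inputs live in R^d, represented as d.-tuple R with its product
   (= Borel) sigma-algebra provided by MathComp-Analysis. *)

(* (A1): for every finite t, (X_1,...,X_t) has the product law of the
   marginals D_k (the law of X_k), i.e. the joint probability of any
   measurable rectangle factorizes. *)
Definition assumption_A1 {dT} {T : measurableType dT} {R : realType}
  (P : probability T R) {dU} {U : measurableType dU} (X : nat -> T -> U) :=
  forall (t : nat) (A : nat -> set U), (forall k, measurable (A k)) ->
    P (\bigcap_(k in [set k | (1 <= k <= t)%N]) (X k @^-1` A k)) =
    (\prod_(1 <= k < t.+1) P (X k @^-1` A k))%E.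

Definition same_law_upto {dT} {T : measurableType dT} {R : realType}
  (P : probability T R) {dU} {U : measurableType dU} (X : nat -> T -> U)
  (t : nat) :=
  forall k, (1 <= k <= t)%N -> forall A : set U, measurable A ->
    P (X k @^-1` A) = P (X 1%N @^-1` A).

Definition vk {T : Type} {R : realType} {n d : nat}
  (ell : 'I_n -> d.-tuple R -> R) (X : nat -> T -> d.-tuple R) (k : nat)
  (w : T) : 'cV[R]_n := \col_i ell i (X k w).

Definition Chat {T : Type} {R : realType} {n d : nat}
  (ell : 'I_n -> d.-tuple R -> R) (X : nat -> T -> d.-tuple R)
  (r t : nat) (w : T) : 'M[R]_n :=
  (r%:R)^-1 *: \sum_(t.+1 - r <= k < t.+1) (vk ell X k w *m (vk ell X k w)^T).

From HB Require Import structures.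
From mathcomp Require Import all_boot all_order all_algebra.
From mathcomp Require Import all_classical all_reals all_analysis.
From mathcomp Require Import measurable_realfun ring lra zify.
Import Order.TTheory GRing.Theory Num.Theory.
Local Open Scope classical_set_scope.
Local Open Scope ring_scope.

(* Entrywise, C^[r](t) - C^[r'](t) = sum_k c_k Y_k over the long window, where
   Y_k = l_i(X_k) l_j(X_k) = +-1 and c_k = [k in the short window]/r - 1/r';
   the c_k sum to 0 and their squares to 1/r - 1/r'.  With Y_k = 2 1_{A_k} - 1
   the difference is Z = 2 sum_k c_k 1_{A_k}, and by (A1) and the equal laws the
   events A_k = {Y_k = 1} are pairwise independent with a common probability p.
   Hence E[Z^2] = 4 p (1 - p) (1/r - 1/r') <= 1/r - 1/r', and E|Z| <= sqrt(E[Z^2])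
   follows from |z| <= z^2/(2s) + s/2. *)

Lemma sum_pred1_seq (V : nmodType) (I : eqType) (s : seq I) (F : I -> V) k :
  uniq s -> k \in s -> \sum_(l <- s) (if l == k then F l else 0) = F k.
Proof.
by move=> s_uniq ks; rewrite -big_mkcond -big_filter filter_pred1_uniq // big_seq1.
Qed.

Section window_weight.
Variables (R : realType) (r r' t : nat).
Hypotheses (r_le_r' : (r <= r')%N) (r'_le_t1 : (r' <= t.+1)%N).

Definition window_weight (k : nat) : R :=
  (if (t.+1 - r <= k)%N then r%:R^-1 else 0) - r'%:R^-1.

Lemma window_avg_diff (y : nat -> R) :
  r%:R^-1 * \sum_(t.+1 - r <= k < t.+1) y k
    - r'%:R^-1 * \sum_(t.+1 - r' <= k < t.+1) y k
  = \sum_(t.+1 - r' <= k < t.+1) window_weight k * y k.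
Proof.
have lo : (t.+1 - r' <= t.+1 - r)%N by exact: leq_sub2l.
have hi : (t.+1 - r <= t.+1)%N by exact: leq_subr.
under [RHS]eq_bigr do rewrite mulrBl.
rewrite sumrB !mulr_sumr; congr (_ - _).
rewrite (big_cat_nat lo hi) /= [X in _ = X + _]big1_seq ?add0r.
  by apply: eq_big_nat => k /andP[-> _].
by move=> k /andP[_]; rewrite mem_index_iota => /andP[_ ltk]; rewrite leqNgt ltk mul0r.
Qed.

Lemma sum_window_weight_comp (G : R -> R) :
  \sum_(t.+1 - r' <= k < t.+1) G (window_weight k)
  = (r' - r)%:R * G (- r'%:R^-1) + r%:R * G (r%:R^-1 - r'%:R^-1).
Proof.
have [lo hi] : (t.+1 - r' <= t.+1 - r)%N /\ (t.+1 - r <= t.+1)%N by lia.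
have outside : \sum_(t.+1 - r' <= k < t.+1 - r) G (window_weight k)
    = (r' - r)%:R * G (- r'%:R^-1).
  rewrite (eq_big_nat _ _ (F2 := fun => G (- r'%:R^-1))) => [|k /andP[_ ltk]].
    by rewrite sumr_const_nat mulr_natl; congr (_ *+ _); lia.
  by rewrite /window_weight leqNgt ltk sub0r.
have inside : \sum_(t.+1 - r <= k < t.+1) G (window_weight k)
    = r%:R * G (r%:R^-1 - r'%:R^-1).
  rewrite (eq_big_nat _ _ (F2 := fun => G (r%:R^-1 - r'%:R^-1))) => [|k /andP[qk _]].
    by rewrite sumr_const_nat mulr_natl; congr (_ *+ _); lia.
  by rewrite /window_weight qk.
by rewrite (big_cat_nat lo hi) outside inside.
Qed.

Hypothesis r_gt0 : (0 < r)%N.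

Let r_neq0 : r%:R != 0 :> R. Proof. by rewrite pnatr_eq0 -lt0n. Qed.
Let r'_neq0 : r'%:R != 0 :> R. Proof. by rewrite pnatr_eq0 -lt0n; lia. Qed.

Lemma sum_window_weight : \sum_(t.+1 - r' <= k < t.+1) window_weight k = 0.
Proof.
by rewrite (sum_window_weight_comp id) natrB //; field; rewrite r_neq0 r'_neq0.
Qed.

Lemma sum_window_weight_sqr :
  \sum_(t.+1 - r' <= k < t.+1) window_weight k ^+ 2 = r%:R^-1 - r'%:R^-1.
Proof.
rewrite (sum_window_weight_comp (fun x => x ^+ 2)) natrB //.
by field; rewrite r_neq0 r'_neq0.
Qed.

End window_weight.

Section indicator_sums.
Context d (T : measurableType d) (R : realType) (P : probability T R).

Lemma Lfun_indic (A : set T) : measurable A -> (\1_A : T -> R) \in Lfun P 1.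
Proof. by move=> mA; apply/Lfun1_integrable; exact: integrable_indic. Qed.

Lemma Lfun_scale_indic (a : R) (A : set T) :
  measurable A -> (fun w => a * \1_A w) \in Lfun P 1.
Proof.
move=> mA; rewrite -[fun w => _]/(a \*o \1_A) mul_funC.
by apply: Lfun_scale; rewrite ?lexx ?Lfun_indic.
Qed.

Lemma expectation_scale_indic (a : R) (A : set T) :
  measurable A -> ('E_P[fun w => (a * \1_A w)%R] = (a * fine (P A))%:E)%E.
Proof.
move=> mA; rewrite -[fun w => _]/(a \*o \1_A) mul_funC expectationZl ?Lfun_indic //.
by rewrite expectation_indic // EFinM fineK // fin_num_measure.
Qed.

Variables (I : Type) (A : I -> set T).
Hypothesis mA : forall k, measurable (A k).

Lemma Lfun_sum_indic (s : seq I) (a : I -> R) :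
  (fun w => \sum_(k <- s) a k * \1_(A k) w) \in Lfun P 1.
Proof.
rewrite -[fun w => _]/(fun w => \sum_(k <- s) (fun w => a k * \1_(A k) w) w).
by rewrite -fct_sumE; apply: rpred_sum => k _; exact: Lfun_scale_indic.
Qed.

Lemma expectation_sum_indic (s : seq I) (a : I -> R) :
  ('E_P[fun w => (\sum_(k <- s) a k * \1_(A k) w)%R]
   = (\sum_(k <- s) a k * fine (P (A k)))%:E)%E.
Proof.
elim: s => [|k s IH].
  by under eq_fun do rewrite big_nil; rewrite expectation_cst big_nil.
under eq_fun do rewrite big_cons.
rewrite -[fun w => _]/((fun w => a k * \1_(A k) w)
  \+ (fun w => \sum_(l <- s) a l * \1_(A l) w)).
rewrite expectationD ?Lfun_scale_indic ?Lfun_sum_indic //.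
by rewrite expectation_scale_indic // IH big_cons EFinD.
Qed.

End indicator_sums.

Section second_moment.
Context {d} {T : measurableType d} {R : realType} {P : probability T R}.
Context {I : eqType} {A : I -> set T} {s : seq I} {p : R}.
Hypotheses (mA : forall k, measurable (A k)) (s_uniq : uniq s).
Hypothesis PA : forall k, k \in s -> P (A k) = p%:E.
Hypothesis PAI : forall k l, k \in s -> l \in s -> k != l ->
  P (A k `&` A l) = (p ^+ 2)%:E.

Let AI (kl : I * I) := A kl.1 `&` A kl.2.

Lemma sqr_sum_indic (c : I -> R) (w : T) :
  (\sum_(k <- s) c k * \1_(A k) w) ^+ 2
  = \sum_(kl <- [seq (k, l) | k <- s, l <- s]) c kl.1 * c kl.2 * \1_(AI kl) w.
Proof.
rewrite big_allpairs expr2 mulr_suml; apply: eq_bigr => k _.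
by rewrite mulr_sumr; apply: eq_bigr => l _; rewrite /AI indicI /=; ring.
Qed.

Lemma Lfun_sqr_sum_indic (c : I -> R) :
  (fun w => (\sum_(k <- s) c k * \1_(A k) w) ^+ 2) \in Lfun P 1.
Proof.
under eq_fun do rewrite sqr_sum_indic.
by apply: Lfun_sum_indic => kl; exact: measurableI.
Qed.

Let fine_PAI k l : k \in s -> l \in s ->
  fine (P (A k `&` A l)) = if l == k then p else p ^+ 2.
Proof.
move=> ks ls; case: eqVneq => [->|lk]; first by rewrite setIid PA.
by rewrite PAI // eq_sym.
Qed.

Lemma expectation_sqr_sum_indic (c : I -> R) :
  ('E_P[fun w => ((\sum_(k <- s) c k * \1_(A k) w) ^+ 2)%R]
   = ((p - p ^+ 2) * \sum_(k <- s) c k ^+ 2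
      + p ^+ 2 * (\sum_(k <- s) c k) ^+ 2)%:E)%E.
Proof.
under eq_fun do rewrite sqr_sum_indic.
rewrite expectation_sum_indic => [|kl]; last exact: measurableI.
rewrite big_allpairs; congr (_%:E).
have row k : k \in s ->
    \sum_(l <- s) c (k, l).1 * c (k, l).2 * fine (P (AI (k, l)))
    = p ^+ 2 * (c k * \sum_(l <- s) c l) + (p - p ^+ 2) * c k ^+ 2.
  move=> ks; transitivity (\sum_(l <- s)
      (p ^+ 2 * (c k * c l) + (p - p ^+ 2) * c k * (if l == k then c l else 0))).
    apply: eq_big_seq => l ls; rewrite /AI /= fine_PAI //.
    by case: eqP => [->|_]; ring.
  by rewrite big_split /= -!mulr_sumr sum_pred1_seq //; ring.
rewrite (eq_big_seq _ row) big_split -!mulr_sumr -mulr_suml -expr2 /=.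
by rewrite addrC.
Qed.

End second_moment.

Lemma expectation_norm_le d (T : measurableType d) (R : realType)
    (P : probability T R) (f : T -> R) (s : R) :
  0 <= s -> f \in Lfun P 1 -> (fun w => f w ^+ 2) \in Lfun P 1 ->
  ('E_P[fun w => (f w ^+ 2)%R] <= (s ^+ 2)%:E)%E ->
  ('E_P[fun w => `|f w|%R] <= s%:E)%E.
Proof.
move=> s_ge0 f1 f2 Ef2; apply/lee_addgt0Pr => e e_gt0; rewrite -EFinD.
(* Bound by [s + e] instead of [s], which may vanish. *)
have u_gt0 : 0 < s + e by exact: ltr_wpDl.
pose g := (2 * (s + e))^-1 \o* (fun w => f w ^+ 2) \+ cst ((s + e) / 2).
have g1 : g \in Lfun P 1 by rewrite rpredD ?Lfun_cst ?Lfun_scale.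
have mf : measurable_fun [set: T] f by have := sub_Lfun_mfun f1; rewrite inE.
have mg : measurable_fun [set: T] g by have := sub_Lfun_mfun g1; rewrite inE.
have amgm w : `|f w| <= g w.
  rewrite /g /= -(real_normK (num_real (f w))) -subr_ge0.
  rewrite (_ : _ - _ = (`|f w| - (s + e)) ^+ 2 / (2 * (s + e))).
    by rewrite divr_ge0 ?sqr_ge0 // mulr_ge0 // ltW.
  by field; rewrite gt_eqF.
apply: (le_trans (expectation_le _ mg _ _ (aeW _ amgm))) => //.
- exact: measurableT_comp (@normr_measurable _ _) mf.
- by move=> w; exact: le_trans (amgm w).
rewrite expectationD ?Lfun_cst ?Lfun_scale // expectationZl // expectation_cst.
move: Ef2; rewrite -(fineK (expectation_fin_num f2)) -EFinM -EFinD !lee_fin => Ef2.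
have : (2 * (s + e))^-1 * fine 'E_P[fun w => (f w ^+ 2)%R]
    <= (2 * (s + e))^-1 * (s + e) ^+ 2.
  apply: ler_wpM2l; first by rewrite invr_ge0 mulr_ge0 // ltW.
  by apply: (le_trans Ef2); nra.
rewrite (_ : _ * (s + e) ^+ 2 = (s + e) / 2); last by field; rewrite gt_eqF.
lra.
Qed.

Lemma A1_indep2 {dT} {T : measurableType dT} {R : realType} {P : probability T R}
    {dU} {U : measurableType dU} {X : nat -> T -> U} (A1 : assumption_A1 P X)
    {t k l : nat} {B C : set U} :
  measurable B -> measurable C -> (1 <= k <= t)%N -> (1 <= l <= t)%N -> k != l ->
  P (X k @^-1` B `&` X l @^-1` C) = (P (X k @^-1` B) * P (X l @^-1` C))%E.
Proof.
move=> mB mC kt lt kl.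
pose A m := if m == k then B else if m == l then C else setT.
have lk : (l == k) = false by rewrite eq_sym (negbTE kl).
have mA m : measurable (A m) by rewrite /A; case: ifP => _ //; case: ifP.
have := A1 t A mA.
have -> : \bigcap_(m in [set m | (1 <= m <= t)%N]) X m @^-1` A m =
    X k @^-1` B `&` X l @^-1` C.
  apply/seteqP; split => [w cap|w [kw lw] m _].
    by split; [have := cap k kt | have := cap l lt]; rewrite /A ?lk eqxx.
  by rewrite /A; case: eqP => [->//|_]; case: eqP => [->//|_].
move=> ->.
rewrite (bigD1_seq k) ?mem_index_iota ?ltnS ?iota_uniq //=.
rewrite -big_filter (bigD1_seq l) ?mem_filter ?(eq_sym l) ?kl ?mem_index_iota ?ltnS //=;
  last by rewrite filter_uniq // iota_uniq.
rewrite big1_seq => [|m /andP[ml]]; last first.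
  rewrite mem_filter => /andP[mk _].
  by rewrite /A (negbTE mk) (negbTE ml) preimage_setT probability_setT.
by rewrite /A eqxx lk eqxx mule1.
Qed.

Lemma pm1_indicE (R : realType) (U : Type) (y : R) (A : set U) (x : U) :
  y = 1 \/ y = -1 -> (A x <-> y = 1) -> y = 2 * \1_A x - 1.
Proof.
rewrite indicE => y_pm1 Ay; case: y_pm1 => yE.
  by rewrite mem_set /=; [lra | exact/Ay].
by rewrite memNset /=; [lra | move/Ay; lra].
Qed.

Section correlation_windows.
Context {R : realType} {T : Type} {n d : nat}.
Variables (ell : 'I_n -> d.-tuple R -> R) (X : nat -> T -> d.-tuple R).
Hypothesis ell_pm1 : forall i x, ell i x = 1 \/ ell i x = -1.

Lemma Chat_entry (r t : nat) (w : T) (i j : 'I_n) :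
  Chat ell X r t w i j
  = r%:R^-1 * \sum_(t.+1 - r <= k < t.+1) ell i (X k w) * ell j (X k w).
Proof.
rewrite /Chat mxE summxE; congr (_ * _); apply: eq_bigr => k _.
by rewrite mxE big_ord1 !mxE.
Qed.

Definition same_sign_event (i j : 'I_n) := [set x | ell i x * ell j x = 1].

Lemma Chat_sub_entry (r r' t : nat) (w : T) (i j : 'I_n) :
  (0 < r)%N -> (r <= r')%N -> (r' <= t.+1)%N ->
  Chat ell X r t w i j - Chat ell X r' t w i j
  = \sum_(t.+1 - r' <= k < t.+1)
      2 * window_weight R r r' t k * \1_(X k @^-1` same_sign_event i j) w.
Proof.
move=> r_gt0 r_le_r' r'_le_t1.
rewrite !Chat_entry (@window_avg_diff R r r' t r_le_r' (fun k => ell i (X k w) * ell j (X k w))).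
transitivity (\sum_(t.+1 - r' <= k < t.+1) window_weight R r r' t k
    * (2 * \1_(X k @^-1` same_sign_event i j) w - 1)).
  apply: eq_bigr => k _; congr (_ * _); apply: pm1_indicE => //.
  by case: (ell_pm1 i (X k w)) => ->; case: (ell_pm1 j (X k w)) => ->;
    rewrite ?mulr1 ?mulrN1 ?opprK; auto.
under eq_bigr do rewrite mulrBr mulr1.
by rewrite sumrB sum_window_weight // subr0; apply: eq_bigr => k _; ring.
Qed.

End correlation_windows.

Theorem proposition5 (R : realType) (dT : measure_display)
  (T : measurableType dT) (P : probability T R) (n d : nat)
  (ell : 'I_n -> d.-tuple R -> R)
  (ell_pm1 : forall i x, ell i x = 1 \/ ell i x = -1)
  (ell_meas : forall i, measurable_fun [set: d.-tuple R] (ell i))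
  (X : nat -> T -> d.-tuple R)
  (X_meas : forall k, measurable_fun [set: T] (X k))
  (A1 : assumption_A1 P X)
  (r r' t : nat) (hr : (1 <= r)%N) (hrr' : (r <= r')%N) (hr't : (r' <= t)%N)
  (hD : same_law_upto P X t) (i j : 'I_n) :
  ('E_P[fun w => (`|Chat ell X r t w i j - Chat ell X r' t w i j|)%R]
    <= (Num.sqrt (r%:R^-1 - r'%:R^-1))%:E)%E.
Proof.
set B := same_sign_event ell i j.
have mB : measurable B.
  rewrite -[B]setTI.
  exact: measurable_funM (ell_meas i) (ell_meas j) _ _ (measurable_set1 1).
pose A k := X k @^-1` B.
have mA k : measurable (A k) by rewrite -[A k]setTI; exact: X_meas.
have r'_le_t1 : (r' <= t.+1)%N by lia.
under eq_fun do rewrite Chat_sub_entry //.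
set s := index_iota _ _.
have s_uniq : uniq s := iota_uniq _ _.
have s_range k : k \in s -> (1 <= k <= t)%N by rewrite mem_index_iota; lia.
pose p := fine (P (A 1%N)).
have PA k : k \in s -> P (A k) = p%:E.
  by move=> /s_range kt; rewrite /p fineK ?fin_num_measure // hD.
have PAI k l : k \in s -> l \in s -> k != l -> P (A k `&` A l) = (p ^+ 2)%:E.
  by move=> ks ls kl; rewrite (A1_indep2 A1 mB mB (s_range k ks) (s_range l ls) kl) !PA.
have v_ge0 : 0 <= r%:R^-1 - r'%:R^-1 :> R.
  by rewrite subr_ge0 lef_pV2 ?posrE ?ltr0n ?ler_nat //; lia.
apply: expectation_norm_le.
- exact: sqrtr_ge0.
- exact: Lfun_sum_indic.
- exact: Lfun_sqr_sum_indic.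
rewrite (expectation_sqr_sum_indic mA s_uniq PA PAI).
rewrite sqr_sqrtr // lee_fin.
under eq_bigr do rewrite exprMn.
rewrite /s -!mulr_sumr sum_window_weight_sqr ?sum_window_weight //.
have : 4 * (p - p ^+ 2) <= 1 by have := sqr_ge0 (2 * p - 1); nra.
nra.
Qed.
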